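(* Let $r>1$, $0<a<r$ coprime, let $Y$ be the Danilov resolution of $\frac1r(1,a,r-a)$, let $\sigma$ be a $3$-dimensional cone of $\Sigma(r,a)$, and let $s\neq t$ be points of the chart $U_\sigma\cong\mathbb C^3$. Then the representations $\mathcal F_s$ and $\mathcal F_t$ of the McKay quiver are not isomorphic.
   Context: Notation: for integers $s$ and $t>0$, $\langle s\rangle_t$ is the least non-negative integer congruent to $s$ modulo $t$. A pair of integers $(r,a)$ is admissible if $r\ge1$, $0\le a<r$, $\gcd(r,a)=1$ (so $a=0$ only for $r=1$). For admissible $(r,a)$ put $N(r,a)=\mathbb Z^3+\mathbb Z\cdot\frac1r(1,a,r-a)\subset\mathbb Q^3$; $e_1,e_2,e_3$ is the standard basis and $\Delta(r,a)$ the cone spanned by $e_1,e_2,e_3$. Let $b$ be an inverse of $a$ modulo $r$ and $p_i=\frac1r(\langle -ib\rangle_r,r-i,i)$, $i=0,\dots,r$ (so $p_0=e_2$, $p_r=e_3$, $p_{r-a}=\frac1r(1,a,r-a)$). For $r>1$ let $(r_L,a_L)=(r-a,\langle r\rangle_{r-a})$, $(r_R,a_R)=(a,\langle -r\rangle_a)$; there are lattice isomorphisms $L:N(r_L,a_L)\to N(r,a)$, $R:N(r_R,a_R)\to N(r,a)$ with $L(e_1)=e_1$, $L(e_2)=e_2$, $L(e_3)=p_{r-a}$, $R(e_1)=e_1$, $R(e_2)=p_{r-a}$, $R(e_3)=e_3$. The Danilov fan $\Sigma(r,a)$ is defined recursively: $\Sigma(1,0)$ is $\Delta(1,0)$ with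 its faces; for $r>1$, $\Sigma(r,a)$ consists of the cone spanned by $e_2,e_3,p_{r-a}$ with its faces, together with $L(\Sigma(r_L,a_L))$ and $R(\Sigma(r_R,a_R))$. The Danilov resolution $Y$ is the smooth toric variety of $\Sigma(r,a)$, with torus $T$; its rays are spanned by $e_1,p_0,\dots,p_r$; $D_i$ is the $T$-invariant prime divisor of the ray through $p_i$ and $E_j$ that of $e_j$. For a $3$-dimensional cone $\sigma$, $U_\sigma\cong\mathbb C^3$ is its affine chart. The permutation $\tau(r,a,\cdot)$ of $\{0,\dots,r-1\}$: if $a\in\{1,r-1\}$, $\tau(r,a,i)=\langle ai-1\rangle_r$; otherwise $\tau(r,a,i)=\tau(r-a,\langle r\rangle_{r-a},\langle i\rangle_{r-a})$ for $i\ge a$ and $\tau(r,a,i)=(r-a)+\tau(a,\langle -r\rangle_a,i)$ for $i<a$. With indices mod $r$, on $Y$ define $Y_{i-a}=\sum_{k=0}^{\tau(r,a,i)}D_k$, $Z_i=\sum_{k=\tau(r,a,i)+1}^{r}D_k$ ($i=0,\dots,r-1$), and $X_0,\dots,X_{r-1}$ the unique divisors with $X_0=E_1$ and $X_i+Z_{i+1}=Z_i+X_{i-a}$; these satisfy $X_i+Y_{i+1}=Y_i+X_{i+a}$, $X_i+Z_{i+1}=Z_i+X_{i-a}$, $Y_i+Z_{i+a}=Z_i+Y_{i-a}$. The McKay quiver has vertices $0,\dots,r-1$ (mod $r$) and arrows $x_i:i\to i+1$, $y_i:i\to i+a$, $z_i:i\to i-a$; a representation assigns a complex number $V(\alpha)$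 to each arrow with $V(y_{i+1})V(x_i)=V(x_{i+a})V(y_i)$, $V(z_{i+1})V(x_i)=V(x_{i-a})V(z_i)$, $V(y_{i-a})V(z_i)=V(z_{i+a})V(y_i)$; $V,V'$ are isomorphic if there exist $g_0,\dots,g_{r-1}\in\mathbb C^*$ with $V'(\alpha)=g_{\mathrm{hd}(\alpha)}V(\alpha)g_{\mathrm{tl}(\alpha)}^{-1}$ for all arrows. The family $\mathcal F$ on $Y$ consists of the line bundles $\mathcal O(X_i),\mathcal O(Y_i),\mathcal O(Z_i)$ with their canonical sections; concretely, for $s\in U_\sigma$, each effective $T$-invariant divisor $D$ restricts on $U_\sigma$ to the divisor of a unique monomial $f_{\sigma,D}$ in the toric coordinates of $U_\sigma$, and $\mathcal F_s$ is the representation with $x_i,y_i,z_i$ represented by $f_{\sigma,X_i}(s),f_{\sigma,Y_i}(s),f_{\sigma,Z_i}(s)$; its isomorphism class does not depend on the chosen chart containing $s$. *)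

From HB Require Import structures.
From mathcomp Require Import all_boot all_order all_algebra.
From mathcomp Require Import complex.
From mathcomp Require Import Rstruct.
Set Implicit Arguments. Unset Strict Implicit. Unset Printing Implicit Defensive.
Import Order.TTheory GRing.Theory Num.Theory.

Definition CC : fieldType := (Rdefinitions.R)[i].

Definition vec := (rat * rat * rat)%type.
Definition mkv (x y z : rat) : vec := (x, y, z).
Definition vx1 (v : vec) := v.1.1.
Definition vx2 (v : vec) := v.1.2.
Definition vx3 (v : vec) := v.2.
Definition vadd (v w : vec) : vec := mkv (vx1 v + vx1 w)%R (vx2 v + vx2 w)%R (vx3 v + vx3 w)%R.
Definition vscale (c : rat) (v : vec) : vec := mkv (c * vx1 v)%R (c * vx2 v)%R (c * vx3 v)%R.
Definition e1 : vec := mkv 1%R 0%R 0%R.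
Definition e2 : vec := mkv 0%R 1%R 0%R.
Definition e3 : vec := mkv 0%R 0%R 1%R.

(** <s>_t for s = -m, i.e. the least non-negative residue of -m mod t *)
Definition negmod (m t : nat) : nat := (t - m %% t) %% t.

Definition invmod (r a : nat) : nat := find (fun b => a * b %% r == 1 %% r) (iota 0 r).

Definition pvec (r a i : nat) : vec :=
  mkv ((negmod (i * invmod r a) r)%:R / r%:R)%R ((r - i)%:R / r%:R)%R (i%:R / r%:R)%R.

Definition Lmap (r a : nat) (v : vec) : vec :=
  vadd (vscale (vx1 v) e1) (vadd (vscale (vx2 v) e2) (vscale (vx3 v) (pvec r a (r - a)))).
Definition Rmap (r a : nat) (v : vec) : vec :=
  vadd (vscale (vx1 v) e1) (vadd (vscale (vx2 v) (pvec r a (r - a))) (vscale (vx3 v) e3)).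

Definition cone3 := (vec * vec * vec)%type.
Definition mapcone (f : vec -> vec) (c : cone3) : cone3 := (f c.1.1, f c.1.2, f c.2).

Definition rL (r a : nat) := r - a.
Definition aL (r a : nat) := r %% (r - a).
Definition rR (r a : nat) := a.
Definition aR (r a : nat) := negmod r a.

Fixpoint dfan_fuel (n r a : nat) : seq cone3 :=
  match n with
  | 0 => [:: (e1, e2, e3)]
  | n'.+1 =>
    if r <= 1 then [:: (e1, e2, e3)]
    else (e2, e3, pvec r a (r - a))
           :: map (mapcone (Lmap r a)) (dfan_fuel n' (rL r a) (aL r a))
           ++ map (mapcone (Rmap r a)) (dfan_fuel n' (rR r a) (aR r a))
  end.
Definition danilov_cones (r a : nat) : seq cone3 := dfan_fuel r r a.

(** * Divisors.  Ray labels: None is the ray of e1 (divisor E_1),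
    Some k is the ray of p_k (divisor D_k), 0 <= k <= r.
    (E_2 = D_0 and E_3 = D_r, as p_0 = e2 and p_r = e3.) *)
Definition label := option nat.
Definition labels (r : nat) : seq label := None :: map Some (iota 0 r.+1).
Definition rayvec (r a : nat) (l : label) : vec :=
  match l with None => e1 | Some k => pvec r a k end.

(** T-invariant divisors: integer coefficient on each ray label. *)
Definition divisor := label -> int.

Definition coefAt (r a : nat) (D : divisor) (v : vec) : int :=
  (\sum_(l <- labels r | rayvec r a l == v) D l)%R.

Fixpoint tau_fuel (n r a i : nat) : nat :=
  match n with
  | 0 => 0
  | n'.+1 =>
    if (a == 1%N) || (a == r.-1) then (a * i + r.-1) %% r   (* <a i - 1>_r *)
    else if a <= i then tau_fuel n' (r - a) (r %% (r - a)) (i %% (r - a))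
    else (r - a) + tau_fuel n' a (negmod r a) i
  end.
Definition tau (r a i : nat) : nat := tau_fuel r r a i.

Definition Zdiv (r a i : nat) : divisor := fun l =>
  match l with None => 0%R | Some k => Posz (nat_of_bool ((tau r a i < k) && (k <= r))) end.
(** Y_j = sum_{k=0}^{tau(<j+a>_r)} D_k   (i.e. Y_{i-a} = sum_{k<=tau(i)} D_k) *)
Definition Ydiv (r a j : nat) : divisor := fun l =>
  match l with None => 0%R | Some k => Posz (nat_of_bool (k <= tau r a ((j + a) %% r))) end.
(** X_i: the unique divisors with X_0 = E_1 and X_i + Z_{i+1} = Z_i + X_{i-a}.
    Solving the recursion along i -> i - a: for i = <-k a>_r (k = <-i b>_r),
    X_i = E_1 + sum_{j<k} (Z_{<1 - j a>_r} - Z_{<-j a>_r}). *)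
Definition Xdiv (r a i : nat) : divisor := fun l =>
  (Posz (nat_of_bool (l == None)) +
  \sum_(j < negmod (i * invmod r a) r)
     (Zdiv r a ((1 + negmod (j * a) r) %% r) l - Zdiv r a (negmod (j * a) r) l))%R.

Definition point := (CC * CC * CC)%type.

(** f_{sigma,D}(s): the monomial whose divisor on U_sigma is D, in the toric
    coordinates dual to the generators (v1, v2, v3) of sigma. *)
Definition monomial (r a : nat) (sigma : cone3) (D : divisor) (s : point) : CC :=
  (s.1.1 ^ coefAt r a D sigma.1.1 * s.1.2 ^ coefAt r a D sigma.1.2
  * s.2 ^ coefAt r a D sigma.2)%R.

(** Representations of the McKay quiver: values on x_i, y_i, z_i (i mod r). *)
Record qrep := QRep { rep_x : nat -> CC; rep_y : nat -> CC; rep_z : nat -> CC }.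

Definition qrep_iso (r a : nat) (V W : qrep) : Prop :=
  exists g : nat -> CC,
    (forall i, i < r -> g i != 0%R) /\
    (forall i, i < r ->
       [/\ rep_x W i = (g ((i + 1) %% r)%N * rep_x V i / g i)%R,
           rep_y W i = (g ((i + a) %% r)%N * rep_y V i / g i)%R &
           rep_z W i = (g ((i + r - a) %% r)%N * rep_z V i / g i)%R]).

Definition mckay_family (r a : nat) (sigma : cone3) (s : point) : qrep :=
  QRep (fun i => monomial r a sigma (Xdiv r a i) s)
       (fun i => monomial r a sigma (Ydiv r a i) s)
       (fun i => monomial r a sigma (Zdiv r a i) s).

(* An isomorphism between [F_s] and [F_t] is a gauge [g] on the vertices with
   [F_t(alpha) = g(head alpha) F_s(alpha) / g(tail alpha)].  On the chart [U_sigma]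
   every arrow whose divisor misses the rays of [sigma] takes the value [1] in both
   representations, so [g] is constant along it.  For every cone of the Danilov fan
   these trivial arrows connect the quiver, and each coordinate of [U_sigma] is the
   monomial of some arrow; so [g] is constant, [F_s] and [F_t] agree arrow by arrow,
   and [s = t].  Both properties are proved along the recursive construction of
   [Sigma(r, a)]: the cone [<e2, e3, p_(r-a)>] is checked directly, and on the rays
   of the subfans [L(Sigma(r - a, _))] and [R(Sigma(a, _))] the divisors
   [X_i, Y_i, Z_i] restrict to those of the smaller resolutions, reindexed by
   [i mod (r - a)], resp. [i mod a]. *)

From HB Require Import structures.
From mathcomp Require Import all_boot all_order all_algebra.
From mathcomp Require Import zify ring lra.
Set Implicit Arguments. Unset Strict Implicit. Unset Printing Implicit Defensive.
Import Order.TTheory GRing.Theory Num.Theory.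

Lemma modn_small_eq (x y r : nat) : y < r -> x = y %[mod r] -> x %% r = y.
Proof. by move=> ? ->; rewrite modn_small. Qed.

Lemma modn_addn1_pred r : 0 < r -> (r.-1 + 1) %% r = 0.
Proof. by move=> r0; rewrite addn1 prednK // modnn. Qed.

Lemma modn_addn_sub_ge r a i : a <= i -> i < r -> (i + r - a) %% r = i - a.
Proof.
move=> ai ir; apply: modn_small_eq; first lia.
by rewrite (_ : i + r - a = i - a + r) ?modnDr //; lia.
Qed.

Lemma modn_addn_sub_lt r a i : i < a -> a <= r -> (i + r - a) %% r = i + (r - a).
Proof. by move=> ia ar; rewrite modn_small; lia. Qed.

Lemma negmod_lt r m : 0 < r -> negmod m r < r.
Proof. by move=> r0; rewrite /negmod ltn_pmod. Qed.

Lemma negmodP r m : 0 < r -> negmod m r + m = 0 %[mod r].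
Proof.
move=> r0; rewrite /negmod modnDml -modnDmr subnK ?modnn ?mod0n //.
exact: ltnW (ltn_pmod m r0).
Qed.

Lemma negmod_unique r m x : x < r -> x + m = 0 %[mod r] -> negmod m r = x.
Proof.
move=> xr h; have r0 : 0 < r by apply: leq_ltn_trans xr.
have : negmod m r + m = x + m %[mod r] by rewrite negmodP // h.
by move/eqP; rewrite eqn_modDr => /eqP; rewrite !modn_small ?negmod_lt.
Qed.

Lemma negmod0 r : negmod 0 r = 0.
Proof. by rewrite /negmod mod0n subn0 modnn. Qed.

Lemma invmodP r a : 0 < r -> coprime r a ->
  invmod r a < r /\ a * invmod r a = 1 %[mod r].
Proof.
move=> r0 co.
have [b br hb] : exists2 b, b < r & a * b = 1 %[mod r].
  case: (posnP a) => [a0|apos].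
    move: co; rewrite a0 /coprime gcdn0 => /eqP ->.
    by exists 0; rewrite ?modn1.
  have [[u v] /= uv] := coprimeP _ apos (etrans (coprime_sym a r) co).
  exists (u %% r); first by rewrite ltn_pmod.
  rewrite modnMmr mulnC (_ : u * a = 1 + v * r); last by nia.
  by rewrite addnC modnMDl.
have hasb : has (fun b => a * b %% r == 1 %% r) (iota 0 r).
  by apply/hasP; exists b; rewrite ?mem_iota ?add0n // hb.
have lt : invmod r a < r by move: (hasb); rewrite has_find size_iota.
by have := nth_find 0 hasb; rewrite nth_iota // add0n => /eqP.
Qed.

Lemma eqn_modn_small x y n : x < n -> y < n -> x = y %[mod n] -> x = y.
Proof. by move=> xn yn; rewrite !modn_small. Qed.

Lemma modn_addr_cancel k x y n : x + k = y + k %[mod n] -> x = y %[mod n].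
Proof. by move/eqP; rewrite eqn_modDr => /eqP. Qed.

Lemma modnBm n x y : 0 < n -> y <= x -> (x %% n + n - y %% n) %% n = (x - y) %% n.
Proof.
move=> n0 yx; apply/eqP; rewrite -(eqn_modDr (y %% n)).
have wn : y %% n <= n by apply: ltnW; rewrite ltn_pmod.
rewrite subnK; last by apply: leq_trans wn (leq_addl _ _).
by rewrite modnDr modnDmr subnK // modn_mod.
Qed.

Lemma residue_window n a c : 0 < n -> c < n -> exists2 m, a <= m < a + n & m %% n = c.
Proof.
move=> n0 cn; exists (a + (c + n - a %% n) %% n).
  by rewrite leq_addr ltn_add2l ltn_pmod.
have an : a %% n < n by rewrite ltn_pmod.
rewrite modnDmr -modnDml addnBA; last lia.
by rewrite addKn modnDr modn_small.
Qed.

Lemma gcdn_subr m n : n <= m -> gcdn m (m - n) = gcdn m n.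
Proof.
move=> nm; have -> : m = m - n + n by rewrite subnK.
by rewrite addnK gcdnC gcdnDl [in RHS]gcdnC gcdnDr gcdnC.
Qed.

Lemma reindex_sum_inj r (f : nat -> int) (h : nat -> nat) :
  (forall j, j < r -> h j < r) ->
  (forall j k, j < r -> k < r -> h j = h k -> j = k) ->
  (\sum_(j < r) f (h j) = \sum_(j < r) f j)%R.
Proof.
move=> hlt hinj; pose H (j : 'I_r) := Ordinal (hlt j (ltn_ord j)).
have injH : injective H.
  by move=> j k /(congr1 val) /(hinj _ _ (ltn_ord j) (ltn_ord k)) /val_inj.
by rewrite [RHS](reindex_inj injH).
Qed.

Definition admissible (r a : nat) := [&& 0 < r, a < r & coprime r a].

Lemma admissible_gt0 r a : admissible r a -> 1 < r -> 0 < a.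
Proof.
case/and3P=> _ _ co r1; case: (posnP a) => // a0.
by move: co r1; rewrite a0 /coprime gcdn0 => /eqP ->.
Qed.

Lemma admissibleL r a : admissible r a -> 1 < r -> admissible (r - a) (r %% (r - a)).
Proof.
case/and3P=> r0 ar co r1; have rl0 : 0 < r - a by rewrite subn_gt0.
apply/and3P; split; rewrite ?ltn_pmod //.
by rewrite coprime_modr /coprime gcdnC gcdn_subr ?(ltnW ar).
Qed.

Lemma admissibleR r a : admissible r a -> 1 < r -> admissible a (negmod r a).
Proof.
move=> adm r1; have a0 := admissible_gt0 adm r1; case/and3P: adm => r0 ar co.
apply/and3P; split; rewrite ?negmod_lt //.
rewrite /negmod coprime_modr /coprime gcdn_subr ?gcdn_modr 1?gcdnC //.
exact: ltnW (ltn_pmod _ _).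
Qed.

Lemma admissible_nonbase r a :
  admissible r a -> ~~ ((a == 1) || (a == r.-1)) -> 1 < r.
Proof.
case/and3P=> r0 ar _ base; rewrite ltnNge; apply/negP => r1.
by move: base; rewrite (_ : a = r.-1) ?eqxx ?orbT //; lia.
Qed.

(** * The divisors X_i *)

(** The vertex [<-k a>_r] reached from [0] by [k] arrows of type [z]; the
    definition of [Xdiv] sums over this orbit, indexed by [k = <-i b>_r]. *)
Definition zorbit (r a k : nat) := negmod (k * a) r.

Section ZOrbit.
Variables (r a : nat).
Hypothesis adm : admissible r a.
Let r0 : 0 < r. Proof. by case/and3P: adm. Qed.
Let ar : a < r. Proof. by case/and3P: adm. Qed.
Let co : coprime r a. Proof. by case/and3P: adm. Qed.
Let b := invmod r a.

Lemma zorbit0 : zorbit r a 0 = 0.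
Proof. exact: negmod0. Qed.

Lemma zorbit_lt k : zorbit r a k < r.
Proof. exact: negmod_lt. Qed.

Lemma zorbitS k : zorbit r a k.+1 = (zorbit r a k + r - a) %% r.
Proof.
apply: negmod_unique; first by rewrite ltn_pmod.
rewrite modnDml (_ : zorbit r a k + r - a + k.+1 * a = zorbit r a k + k * a + r).
  by rewrite modnDr negmodP.
rewrite mulSn; nia.
Qed.

Lemma zorbit_pred : zorbit r a r.-1 = a.
Proof. by apply: negmod_unique => //; rewrite -mulSn prednK // modnMr mod0n. Qed.

Lemma mul_invmod i : i * (a * b) = i %[mod r].
Proof. by rewrite -modnMmr (proj2 (invmodP r0 co)) modnMmr muln1. Qed.

Lemma negmod_mul_inv m : a * negmod (m * b) r + m = 0 %[mod r].
Proof.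
have := congr1 (fun x => a * x %% r) (negmodP (m * b) r0); rewrite /= !modnMmr.
rewrite muln0 mod0n mulnDr mulnA [a * m]mulnC -mulnA.
by rewrite -modnDmr mul_invmod modnDmr.
Qed.

Lemma zorbit_inv i : i < r -> zorbit r a (negmod (i * b) r) = i.
Proof.
move=> ir; apply: negmod_unique => //.
by rewrite addnC mulnC negmod_mul_inv.
Qed.

Lemma zorbitK k : k < r -> negmod (zorbit r a k * b) r = k.
Proof.
move=> kr; apply: negmod_unique => //.
have e : (zorbit r a k + k * a) * b = k + zorbit r a k * b %[mod r].
  by rewrite mulnDl -mulnA -modnDmr mul_invmod modnDmr addnC.
by rewrite -e -modnMml negmodP // mod0n mul0n mod0n.
Qed.

Lemma zorbit_inj j k : j < r -> k < r -> zorbit r a j = zorbit r a k -> j = k.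
Proof. by move=> jr kr e; rewrite -(zorbitK jr) -(zorbitK kr) e. Qed.

End ZOrbit.

Definition Xsum (r a k : nat) (l : label) : int :=
  (Posz (l == None)
   + \sum_(j < k) (Zdiv r a ((1 + zorbit r a j) %% r) l - Zdiv r a (zorbit r a j) l))%R.

Lemma XdivE r a i l : Xdiv r a i l = Xsum r a (negmod (i * invmod r a) r) l.
Proof. by []. Qed.

Lemma XsumS r a k l : Xsum r a k.+1 l =
  (Xsum r a k l + (Zdiv r a ((1 + zorbit r a k) %% r) l - Zdiv r a (zorbit r a k) l))%R.
Proof. by rewrite /Xsum big_ord_recr /= addrA. Qed.

Lemma Xsum0 r a l : Xsum r a 0 l = Posz (l == None).
Proof. by rewrite /Xsum big_ord0 addr0. Qed.

Lemma Xdiv0 r a l : Xdiv r a 0 l = Posz (l == None).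
Proof. by rewrite XdivE mul0n negmod0 Xsum0. Qed.

Definition Xrec (r a : nat) (F : nat -> int) (l : label) (i : nat) : Prop :=
  (F i + Zdiv r a ((i + 1) %% r)%N l = Zdiv r a i l + F ((i + r - a) %% r)%N)%R.

Section XRecursion.
Variables (r a : nat).
Hypothesis adm : admissible r a.
Let r0 : 0 < r. Proof. by case/and3P: adm. Qed.

Lemma Xdiv_zorbit k l : k < r -> Xdiv r a (zorbit r a k) l = Xsum r a k l.
Proof. by move=> kr; rewrite XdivE (zorbitK adm). Qed.

(* The sum over a full z-orbit telescopes, as [j |-> zorbit j] and
   [j |-> zorbit j + 1] both permute the vertices. *)
Lemma Xsum_orbit l : Xsum r a r l = Xsum r a 0 l.
Proof.
have zinj := zorbit_inj adm.
have reindex h : (forall j, j < r -> h j < r) ->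
    (forall j k, j < r -> k < r -> h j = h k -> j = k) ->
    (\sum_(j < r) Zdiv r a (h j) l = \sum_(j < r) Zdiv r a j l)%R.
  exact: (@reindex_sum_inj r (fun m => Zdiv r a m l)).
rewrite Xsum0 /Xsum sumrB (reindex (zorbit r a)) ?(reindex (fun j => (1 + zorbit r a j) %% r)).
- by rewrite subrr addr0.
- by move=> j _; rewrite ltn_pmod.
- move=> j k jr kr /eqP; rewrite eqn_modDl !modn_small ?(zorbit_lt adm) // => /eqP.
  exact: zinj.
- by move=> j _; apply: (zorbit_lt adm).
- exact: zinj.
Qed.

Lemma Xdiv_rec l i : i < r -> Xrec r a (fun j => Xdiv r a j l) l i.
Proof.
move=> ir; rewrite /Xrec /= -(zorbit_inv adm ir); set k := negmod _ r.
have kr : k < r by apply: negmod_lt.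
rewrite -(zorbitS adm) Xdiv_zorbit // [(_ + 1)%N]addnC.
case: (ltnP k.+1 r) => [k1r|rk].
  by rewrite Xdiv_zorbit // XsumS; ring.
(* At [k = r - 1] the orbit closes up at [X_0], and the sum telescopes. *)
have ek : k = r.-1 by lia.
have := XsumS r a r.-1 l; rewrite prednK // Xsum_orbit Xsum0 (zorbit_pred adm) => full.
rewrite ek (zorbitS adm) (zorbit_pred adm) (addnC a r) addnK modnn Xdiv0 full; ring.
Qed.

(* Walking along the [z]-orbit of [0] uses the relation at every vertex except
   [a], the last one before the orbit returns to [0]. *)
Lemma Xdiv_unique (F : nat -> int) l : F 0 = Xdiv r a 0 l ->
  (forall i, i < r -> i != a -> Xrec r a F l i) ->
  forall i, i < r -> F i = Xdiv r a i l.
Proof.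
move=> F0 Frec.
suff H k : k < r -> F (zorbit r a k) = Xdiv r a (zorbit r a k) l.
  by move=> i ir; rewrite -(zorbit_inv adm ir) H ?negmod_lt.
elim: k => [|k IH] kr; first by rewrite zorbit0.
have ka : zorbit r a k != a.
  apply: contraTneq (kr) => e; have rr : r.-1 < r by rewrite ltn_predL.
  have := zorbit_inj adm (ltnW kr) rr (etrans e (esym (zorbit_pred adm))); lia.
have := Frec _ (zorbit_lt adm k) ka; rewrite /Xrec -(zorbitS adm).
rewrite [(_ + 1)%N]addnC !Xdiv_zorbit ?(ltnW kr) // in IH * => e.
by rewrite XsumS -IH //; apply: (addrI (Zdiv r a (zorbit r a k) l)); rewrite -e; ring.
Qed.

End XRecursion.

(** * The permutation tau *)

Lemma tau_fuelS n r a i : tau_fuel n.+1 r a i =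
  if (a == 1) || (a == r.-1) then (a * i + r.-1) %% r
  else if a <= i then tau_fuel n (r - a) (r %% (r - a)) (i %% (r - a))
  else (r - a) + tau_fuel n a (negmod r a) i.
Proof. by []. Qed.

Lemma tau_fuel_stable n r a i :
  admissible r a -> r <= n -> tau_fuel n.+1 r a i = tau_fuel n r a i.
Proof.
elim: n r a i => [|n IH] r a i adm rn.
  by case/and3P: adm; lia.
rewrite tau_fuelS [in RHS]tau_fuelS; case: ifP => // base.
have r1 := admissible_nonbase adm (negbT base).
have a0 := admissible_gt0 adm r1; case/and3P: (adm) => _ ar _.
case: ifP => _; last congr (_ + _).
  by apply: IH; [exact: admissibleL | lia].
by apply: IH; [exact: admissibleR | lia].
Qed.

Lemma tau_fuelE n r a i : admissible r a -> r <= n -> tau_fuel n r a i = tau r a i.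
Proof.
move=> adm /subnK <-; rewrite /tau; elim: (n - r) => // d IH.
by rewrite addSn tau_fuel_stable // leq_addl.
Qed.

Lemma tau_base r a i : 0 < r -> (a == 1) || (a == r.-1) ->
  tau r a i = (a * i + r.-1) %% r.
Proof. by rewrite /tau; case: r => // r _ base; rewrite tau_fuelS base. Qed.

Lemma tau_rec r a i : admissible r a -> ~~ ((a == 1) || (a == r.-1)) ->
  tau r a i = if a <= i then tau (r - a) (r %% (r - a)) (i %% (r - a))
              else (r - a) + tau a (negmod r a) i.
Proof.
move=> adm base; case/and3P: (adm) => r0 ar _.
have r1 := admissible_nonbase adm base.
have a0 := admissible_gt0 adm r1.
rewrite {1}/tau -(prednK r0) tau_fuelS prednK // (negbTE base).
case: ifP => _; last congr (_ + _).
  by apply: tau_fuelE; [exact: admissibleL | lia].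
by apply: tau_fuelE; [exact: admissibleR | lia].
Qed.

Lemma tau1 i : tau 1 0 i = 0.
Proof. by rewrite tau_base // modn1. Qed.

Lemma tau_a1 r i : 0 < r -> i < r -> tau r 1 i = if i == 0 then r.-1 else i.-1.
Proof.
move=> r0 ir; rewrite tau_base // mul1n.
case: eqP => [->|i0]; first by rewrite add0n modn_small // prednK.
by apply: modn_small_eq; [lia | rewrite (_ : i + r.-1 = i.-1 + r) ?modnDr //; lia].
Qed.

Lemma tau_apred r i : 1 < r -> i < r -> tau r r.-1 i = r.-1 - i.
Proof.
move=> r1 ir; rewrite tau_base ?eqxx ?orbT //; last lia.
apply: modn_small_eq; first lia.
by rewrite (_ : r.-1 * i + r.-1 = i * r + (r.-1 - i)) ?modnMDl //; nia.
Qed.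

Section TauSplit.
Variables (r a : nat).
Hypotheses (adm : admissible r a) (r1 : 1 < r).

(* The recursion of [tau] also holds in the base cases [a = 1] and [a = r - 1]. *)
Lemma tauL i : a <= i -> i < r -> tau r a i = tau (r - a) (r %% (r - a)) (i %% (r - a)).
Proof.
move=> ai ir.
have [base|] := boolP ((a == 1) || (a == r.-1)); last by move/(tau_rec i adm) ->; rewrite ai.
have [a1|an1] := eqVneq a 1.
  subst a; rewrite tau_a1 //; last lia.
  have [r2|r2] := eqVneq r 2; first by subst r; have -> : i = 1 by lia.
  have rm : r %% (r - 1) = 1.
    by rewrite -{1}(subnK (ltnW r1)) modnDl modn_small //; lia.
  rewrite rm tau_a1 ?ltn_pmod; try lia.
  have i0 : (i == 0) = false by lia.
  have [->|ei] := eqVneq i (r - 1).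
    by rewrite modnn eqxx (_ : (r - 1 == 0) = false); lia.
  by rewrite modn_small ?i0; lia.
move: base; rewrite (negbTE an1) /= => /eqP ea.
rewrite (_ : r - a = 1) ?modn1 ?tau1; last lia.
have -> : i = r.-1 by lia.
by rewrite ea tau_apred ?subnn //; lia.
Qed.

Lemma tauR i : i < a -> tau r a i = (r - a) + tau a (negmod r a) i.
Proof.
move=> ia.
have [base|] := boolP ((a == 1) || (a == r.-1)); last first.
  by move/(tau_rec i adm) ->; rewrite leqNgt ia.
have [a1|an1] := eqVneq a 1.
  subst a; have -> : i = 0 by lia.
  have -> : negmod r 1 = 0 by rewrite /negmod !modn1.
  by rewrite tau1 tau_a1 //=; lia.
move: base; rewrite (negbTE an1) /= => /eqP ea.
have -> : negmod r a = a.-1.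
  apply: negmod_unique; first lia.
  by rewrite (_ : a.-1 + r = 2 * a) ?modnMl ?mod0n //; lia.
rewrite tau_apred // ?ea ?tau_apred; lia.
Qed.

End TauSplit.

Lemma tau_lt r a i : admissible r a -> i < r -> tau r a i < r.
Proof.
elim: r {-2}r (leqnn r) a i => [|n IH] r rn a i adm ir; first by case/and3P: adm; lia.
case/and3P: (adm) => r0 ar co.
have [r1|r1] := ltnP 1 r; last first.
  by have [-> ->] : r = 1 /\ a = 0 by lia.
have a0 := admissible_gt0 adm r1.
have [ai|ia] := leqP a i.
  rewrite tauL //.
  have : tau (r - a) (r %% (r - a)) (i %% (r - a)) < r - a.
    by apply: IH; [lia | exact: admissibleL | rewrite ltn_pmod //; lia].
  lia.
rewrite tauR //.
have : tau a (negmod r a) i < a by apply: IH; [lia | exact: admissibleR | ].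
lia.
Qed.

(** * Rays and the lattice maps L and R *)

Lemma labels_uniq r : uniq (labels r).
Proof.
rewrite /labels cons_uniq map_inj_uniq ?iota_uniq ?andbT; last by move=> x y [].
by apply/negP => /mapP [].
Qed.

Lemma mem_labels r l : (l \in labels r) = if l is Some k then k <= r else true.
Proof.
case: l => [k|]; last by rewrite in_cons eqxx.
by rewrite /labels in_cons (mem_map (@Some_inj _)) mem_iota add0n ltnS.
Qed.

Lemma labels_subset r r' l : r' <= r -> l \in labels r' -> l \in labels r.
Proof. by rewrite !mem_labels; case: l => // k h1 h2; apply: leq_trans h2 h1. Qed.

Lemma natr_div_inj (r k k' : nat) : 0 < r ->
  (k%:R / r%:R = k'%:R / r%:R :> rat)%R -> k = k'.
Proof.
move=> r0 /(congr1 (fun x => x * r%:R)%R); rewrite !mulfVK ?pnatr_eq0 -?lt0n //.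
by move/eqP; rewrite eqr_nat => /eqP.
Qed.

Lemma rayvec_inj r a : 0 < r -> injective (rayvec r a).
Proof.
move=> r0; have rn : (r%:R != 0 :> rat)%R by rewrite pnatr_eq0 -lt0n.
have pvec_neq_e1 k : pvec r a k <> e1.
  case=> _ h2 h3; have k0 : k = 0 by apply: (@natr_div_inj r) => //; rewrite h3 mul0r.
  by move: h2; rewrite k0 subn0 divff.
case=> [k1|] [k2|] //= h.
- by congr Some; case: h => _ _; apply: natr_div_inj.
- by case: (pvec_neq_e1 _ h).
- by case: (pvec_neq_e1 k2); rewrite h.
Qed.

Lemma coefAt_rayvec r a D l : 0 < r -> l \in labels r ->
  coefAt r a D (rayvec r a l) = D l.
Proof.
move=> r0 hl; rewrite /coefAt big_mkcond (bigD1_seq l) ?labels_uniq //= eqxx.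
rewrite big1_seq ?addr0 // => l' /andP [l'l _].
by case: eqP => // /(rayvec_inj r0) e; move: l'l; rewrite e eqxx.
Qed.

Lemma pvec0 r a : 0 < r -> pvec r a 0 = e2.
Proof.
by move=> r0; rewrite /pvec mul0n negmod0 subn0 !mul0r divff // pnatr_eq0 -lt0n.
Qed.

Lemma pvecr r a : 0 < r -> pvec r a r = e3.
Proof.
move=> r0; rewrite /pvec (_ : negmod (r * invmod r a) r = 0).
  by rewrite subnn !mul0r divff // pnatr_eq0 -lt0n.
by apply: negmod_unique => //; rewrite add0n modnMr mod0n.
Qed.

(** The ray [p_m] of [Sigma(a, <-r>_a)] is mapped by [R] to the ray [p_(r - a + m)]. *)
Definition shiftR (r a : nat) (l : label) : label :=
  if l is Some m then Some (r - a + m) else None.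

Section LatticeMaps.
Variables (r a : nat).
Hypotheses (adm : admissible r a) (r1 : 1 < r).
Let a0 : 0 < a. Proof. exact: admissible_gt0 adm r1. Qed.
Let r0 : 0 < r. Proof. by case/and3P: adm. Qed.
Let ar : a < r. Proof. by case/and3P: adm. Qed.
Let co : coprime r a. Proof. by case/and3P: adm. Qed.

(* Both identities between first coordinates are checked modulo [r] and modulo
   [r - a] (resp. [a]) separately, by the Chinese remainder theorem. *)
Lemma first_coordL m : m <= r - a ->
  r * negmod (m * invmod (r - a) (r %% (r - a))) (r - a) + m
  = (r - a) * negmod (m * invmod r a) r.
Proof.
move=> mr; have admL := admissibleL adm r1; case/and3P: (admL) => rL0 aLr coL.
set x := negmod (m * invmod r a) r; set y := negmod _ (r - a).
have xr : x < r by exact: negmod_lt.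
have yr : y < r - a by exact: negmod_lt.
have corL : coprime r (r - a) by rewrite /coprime gcdn_subr ?(ltnW ar).
apply: (@eqn_modn_small _ _ (r * (r - a))); [nia | nia |].
apply/eqP; rewrite (chinese_remainder corL); apply/andP; split; apply/eqP.
- rewrite mulnC modnMDl; apply: (@modn_addr_cancel (a * x)).
  rewrite -mulnDl subnK ?(ltnW ar) // modnMr addnC.
  by rewrite (negmod_mul_inv adm m) mod0n.
- have := negmod_mul_inv admL m; rewrite -/y => h.
  by rewrite modnMr -modnDml -modnMml modnDml h mod0n.
Qed.

Lemma first_coordR m : m <= a ->
  r * negmod (m * invmod a (negmod r a)) a + a
  = a * negmod ((r - a + m) * invmod r a) r + m.
Proof.
move=> ma; have admR := admissibleR adm r1; case/and3P: (admR) => _ aRa coR.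
have hR := negmodP r a0.
set aR := negmod r a in aRa coR admR hR *.
set x := negmod ((r - a + m) * invmod r a) r; set y := negmod (m * invmod a aR) a.
have xr : x < r by exact: negmod_lt.
have ya : y < a by exact: negmod_lt.
have x0 : m = a -> x = 0.
  move=> ema; rewrite /x ema subnK ?(ltnW ar) //; apply: negmod_unique => //.
  by rewrite add0n modnMr mod0n.
apply: (@eqn_modn_small _ _ (r * a)).
- nia.
- by have [/x0 -> | _] := eqVneq m a; nia.
apply/eqP; rewrite (chinese_remainder co); apply/andP; split; apply/eqP.
- rewrite mulnC modnMDl; apply: (@modn_addr_cancel (r - a)).
  rewrite subnKC ?(ltnW ar) // modnn -addnA [m + _]addnC.
  by rewrite (negmod_mul_inv adm (r - a + m)) mod0n.
- rewrite [a * x]mulnC modnMDl modnDr; apply: (@modn_addr_cancel (aR * y)).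
  have h := negmod_mul_inv admR m; rewrite -/y in h.
  have := congr1 (fun n => y * n %% a) hR; rewrite /= !modnMmr muln0 mulnDr.
  by rewrite [m + _]addnC h [r * y]mulnC [y * aR]mulnC addnC => ->; rewrite mod0n.
Qed.

Lemma negmod_subn_invmod : negmod ((r - a) * invmod r a) r = 1.
Proof.
have [_ hb] := invmodP r0 co; apply: negmod_unique => //.
by rewrite -modnDml -hb modnDml -mulnDl subnKC ?(ltnW ar) // modnMr mod0n.
Qed.

Lemma pvec_center : pvec r a (r - a) = mkv (1 / r%:R) (a%:R / r%:R) ((r - a)%:R / r%:R).
Proof. by rewrite /pvec negmod_subn_invmod subKn // ltnW. Qed.
Let rn : (r%:R != 0 :> rat)%R. Proof. by rewrite pnatr_eq0 -lt0n. Qed.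
Let e_subn : ((r - a)%:R = r%:R - a%:R :> rat)%R. Proof. by rewrite natrB // ltnW. Qed.

Lemma Lmap_pvec m : m <= r - a -> Lmap r a (pvec (r - a) (r %% (r - a)) m) = pvec r a m.
Proof.
move=> mr; have := first_coordL mr.
rewrite /Lmap pvec_center /vadd /vscale /e1 /e2 /mkv /vx1 /vx2 /vx3 /pvec /=.
set x := negmod (m * invmod r a) r; set y := negmod _ (r - a) => hf.
have rln : ((r - a)%:R != 0 :> rat)%R by rewrite pnatr_eq0 -lt0n subn_gt0.
have ex : (x%:R = (r%:R * y%:R + m%:R) / (r - a)%:R :> rat)%R.
  by rewrite -natrM -natrD hf natrM; field.
have rln' : (r%:R - a%:R != 0 :> rat)%R by rewrite -e_subn.
rewrite ex !natrB; try lia.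
by congr (_, _, _); field; rewrite rn rln'.
Qed.

Lemma Rmap_pvec m : m <= a -> Rmap r a (pvec a (negmod r a) m) = pvec r a (r - a + m).
Proof.
move=> ma; have := first_coordR ma.
rewrite /Rmap pvec_center /vadd /vscale /e3 /mkv /vx1 /vx2 /vx3 /pvec /=.
set x := negmod ((r - a + m) * invmod r a) r; set y := negmod _ a => hf.
have an : (a%:R != 0 :> rat)%R by rewrite pnatr_eq0 -lt0n.
have ex : (x%:R = (r%:R * y%:R + a%:R - m%:R) / a%:R :> rat)%R.
  by rewrite (_ : r%:R * y%:R + a%:R = a%:R * x%:R + m%:R)%R -?natrM -?natrD ?hf //; field.
rewrite ex (_ : r - (r - a + m) = a - m); last lia.
rewrite !natrD !natrB ?e_subn; try lia.
by congr (_, _, _); field; rewrite ?rn ?an.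
Qed.

Lemma Lmap_rayvec l : l \in labels (r - a) ->
  Lmap r a (rayvec (r - a) (r %% (r - a)) l) = rayvec r a l.
Proof.
case: l => [m|] /=; first by rewrite mem_labels => hm; apply: Lmap_pvec.
by move=> _; rewrite /Lmap /vadd /vscale /e1 /mkv /vx1 /vx2 /vx3 /=; congr (_, _, _); ring.
Qed.

Lemma Rmap_rayvec l : l \in labels a ->
  Rmap r a (rayvec a (negmod r a) l) = rayvec r a (shiftR r a l).
Proof.
case: l => [m|] /=; first by rewrite mem_labels => hm; apply: Rmap_pvec.
by move=> _; rewrite /Rmap /vadd /vscale /e1 /mkv /vx1 /vx2 /vx3 /=; congr (_, _, _); ring.
Qed.

Lemma shiftR_labels l : l \in labels a -> shiftR r a l \in labels r.
Proof. by case: l => [m|] //=; rewrite !mem_labels; lia. Qed.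

End LatticeMaps.

(** [Ytau r a m] is the divisor [Y_(m - a) = D_0 + ... + D_(tau m)]. *)
Definition Ytau (r a m : nat) (l : label) : int :=
  if l is Some k then Posz (k <= tau r a m) else 0.

Lemma YdivE r a j l : Ydiv r a j l = Ytau r a ((j + a) %% r) l.
Proof. by case: l. Qed.

Section Restriction.
Variables (r a : nat).
Hypotheses (adm : admissible r a) (r1 : 1 < r).
Let ar : a < r. Proof. by case/and3P: adm. Qed.

Lemma tau_ltL i : a <= i -> i < r -> tau r a i < r - a.
Proof.
move=> ai ir; rewrite tauL //; apply: tau_lt; first exact: admissibleL.
by rewrite ltn_pmod // subn_gt0.
Qed.

Lemma tau_geR i : i < a -> r - a <= tau r a i.
Proof. by move=> ia; rewrite tauR // leq_addr. Qed.

Lemma ZdivL i l : l \in labels (r - a) -> a <= i -> i < r ->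
  Zdiv r a i l = Zdiv (r - a) (r %% (r - a)) (i %% (r - a)) l.
Proof.
case: l => [k|] //; rewrite mem_labels => kl ai ir /=.
by rewrite tauL // kl (_ : k <= r) //; lia.
Qed.

Lemma ZdivL0 i l : l \in labels (r - a) -> i < a -> Zdiv r a i l = 0%R.
Proof.
case: l => [k|] //; rewrite mem_labels => kl ia /=.
by have := tau_geR ia; case: ltnP => //; lia.
Qed.

Lemma YtauL m l : l \in labels (r - a) -> a <= m -> m < r ->
  Ytau r a m l = Ytau (r - a) (r %% (r - a)) (m %% (r - a)) l.
Proof. by case: l => [k|] //= _ am mr; rewrite tauL. Qed.

Lemma ZdivR i l : l \in labels a -> i < a ->
  Zdiv r a i (shiftR r a l) = Zdiv a (negmod r a) i l.
Proof.
case: l => [k|] //; rewrite mem_labels => ka ia /=.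
by rewrite tauR // ltn_add2l (_ : r - a + k <= r = (k <= a)) //; lia.
Qed.

Lemma ZdivR1 i l : l \in labels a -> a <= i -> i < r ->
  Zdiv r a i (shiftR r a l) = Posz (l != None).
Proof.
case: l => [k|] //; rewrite mem_labels => ka ai ir /=.
by have := tau_ltL ai ir => h; rewrite (_ : tau r a i < r - a + k) ?andbT //; lia.
Qed.

Lemma YtauR0 m l : l \in labels a -> a <= m -> m < r ->
  Ytau r a m (shiftR r a l) = 0%R.
Proof.
case: l => [k|] //; rewrite mem_labels => ka am mr /=.
by have := tau_ltL am mr => h; rewrite (_ : r - a + k <= tau r a m = false) //; lia.
Qed.

Lemma YtauR m l : l \in labels a -> m < a ->
  Ytau r a m (shiftR r a l) = Ytau a (negmod r a) m l.
Proof. by case: l => [k|] // _ ma /=; rewrite tauR // leq_add2l. Qed.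

End Restriction.

(** The heads of the arrows [x_i] and [z_i]. *)
Variant zstep_spec (r a i : nat) : nat -> nat -> Type :=
  | ZStepLast of i = r.-1 : zstep_spec r a i 0 (r.-1 - a)
  | ZStepHigh of a <= i & i < r.-1 : zstep_spec r a i i.+1 (i - a)
  | ZStepLow of i < a : zstep_spec r a i i.+1 (i + (r - a)).

Lemma zstepP r a i : 0 < a -> a < r -> i < r ->
  zstep_spec r a i ((i + 1) %% r) ((i + r - a) %% r).
Proof.
move=> a0 ar ir.
have [ei|] := eqVneq i r.-1.
  by rewrite ei modn_addn1_pred ?modn_addn_sub_ge; [constructor | lia..].
move=> ni; rewrite addn1 modn_small; last lia.
have [ai|ia] := leqP a i.
  by rewrite modn_addn_sub_ge //; constructor; lia.
by rewrite modn_addn_sub_lt //; [constructor | lia].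
Qed.

Section XdivLeft.
Variables (r a : nat) (l : label).
Hypotheses (adm : admissible r a) (r1 : 1 < r) (hl : l \in labels (r - a)).
Let a0 : 0 < a. Proof. exact: admissible_gt0 adm r1. Qed.
Let ar : a < r. Proof. by case/and3P: adm. Qed.
Let r0 : 0 < r. Proof. exact: ltnW r1. Qed.
Let rL0 : 0 < r - a. Proof. by rewrite subn_gt0. Qed.
Let X' j := Xdiv (r - a) (r %% (r - a)) j l.
Let Z' j := Zdiv (r - a) (r %% (r - a)) j l.

Let XrecL c : a <= c ->
  (X' (c %% (r - a)) + Z' ((c + 1) %% (r - a))
   = Z' (c %% (r - a)) + X' ((c - a) %% (r - a)))%R.
Proof.
move=> ac; have := Xdiv_rec (admissibleL adm r1) l (ltn_pmod c rL0).
have ra : r %% (r - a) = a %% (r - a) by rewrite -{1}(subnKC (ltnW ar)) modnDr.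
have e : (c %% (r - a) + (r - a) - r %% (r - a)) %% (r - a) = (c - a) %% (r - a).
  by rewrite ra modnBm.
by rewrite /Xrec modnDml e.
Qed.

(* The solution of the recursion of [X] on these rays is [X'_(i mod (r - a))],
   corrected by [Z'_r] at [i = r - 1]. *)
Lemma XdivL c : c < r - a -> Xdiv r a c l = X' c.
Proof.
move=> cr; have cr1 : c < r.-1 by lia.
have r10 : 0 < r.-1 by lia.
have ra : r %% (r - a) = a %% (r - a) by rewrite -{1}(subnKC (ltnW ar)) modnDr.
pose F i := if i == r.-1 then (X' (i %% (r - a)) + Z' (r %% (r - a)))%R
            else X' (i %% (r - a)).
have FE i : i < r.-1 -> F i = X' (i %% (r - a)) by move=> ir; rewrite /F ltn_eqF.
have FL : F r.-1 = (X' (r.-1 %% (r - a)) + Z' (r %% (r - a)))%R by rewrite /F eqxx.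
suff FX : forall i, i < r -> F i = Xdiv r a i l.
  by rewrite -FX ?FE ?modn_small //; apply: leq_trans cr1 (leq_pred r).
apply: (Xdiv_unique adm) => [|i ir ia]; first by rewrite FE // mod0n /X' !Xdiv0.
rewrite /Xrec; case: (zstepP a0 ar ir) => [ei|ai ir1|ia'].
- have ar1 : a <= r.-1 by lia.
  have h := XrecL ar1; rewrite addn1 prednK // in h.
  rewrite ei FL FE ?(ZdivL0 adm r1 hl a0) ?(ZdivL adm r1 hl ar1) ?addr0 ?h //; lia.
- have h := XrecL ai; rewrite addn1 in h.
  rewrite !FE ?(ZdivL adm r1 hl) ?h //; lia.
- rewrite FE ?(ZdivL0 adm r1 hl ia') ?add0r; last by lia.
  have [ea|ia1] := eqVneq i.+1 a.
    have eL : i + (r - a) = r.-1 by lia.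
    have Za : Zdiv r a i.+1 l = Z' (r %% (r - a)).
      by rewrite ea (ZdivL adm r1 hl (leqnn a) ar) /Z' -ra.
    by rewrite eL FL Za -eL modnDr.
  have ia2 : i.+1 < a by lia.
  by rewrite (ZdivL0 adm r1 hl ia2) addr0 FE ?modnDr //; lia.
Qed.
End XdivLeft.

Section XdivRight.
Variables (r a : nat) (l : label).
Hypotheses (adm : admissible r a) (r1 : 1 < r) (hl : l \in labels a).
Let a0 : 0 < a. Proof. exact: admissible_gt0 adm r1. Qed.
Let ar : a < r. Proof. by case/and3P: adm. Qed.
Let X' j := Xdiv a (negmod r a) j l.
Let Z' j := Zdiv a (negmod r a) j l.
Let full : int := Posz (l != None).

Let XrecR c : c < a ->
  (X' c + Z' ((c + 1) %% a) = Z' c + X' ((c + (r - a)) %% a))%R.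
Proof.
move=> ca; have := Xdiv_rec (admissibleR adm r1) l ca.
rewrite /Xrec (_ : (c + a - negmod r a) %% a = (c + (r - a)) %% a) //.
have aRa : negmod r a < a by apply: negmod_lt.
apply: (@modn_addr_cancel (negmod r a + a)).
rewrite (_ : c + a - negmod r a + (negmod r a + a) = 2 * a + c); last lia.
rewrite (_ : c + (r - a) + (negmod r a + a) = c + (negmod r a + r)); last lia.
by rewrite modnMDl -modnDmr negmodP // mod0n addn0.
Qed.

(* The solution of the recursion of [X] on these rays is [X'_(i mod a)],
   corrected at [i = r - 1]. *)
Lemma XdivR c : c < a -> Xdiv r a c (shiftR r a l) = X' c.
Proof.
move=> ca; have r10 : 0 < r.-1 by lia.
pose F i := if i == r.-1 then (X' a.-1 + full - Z' a.-1)%R else X' (i %% a).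
have FE i : i < r.-1 -> F i = X' (i %% a) by move=> ir; rewrite /F ltn_eqF.
have FL : F r.-1 = (X' a.-1 + full - Z' a.-1)%R by rewrite /F eqxx.
suff FX : forall i, i < r -> F i = Xdiv r a i (shiftR r a l).
  by rewrite -FX ?FE ?modn_small //; lia.
apply: (Xdiv_unique adm) => [|i ir ia].
  by rewrite FE // mod0n /X' !Xdiv0; case: (l).
have ZR := ZdivR adm r1 hl; have ZR1 := ZdivR1 adm r1 hl.
rewrite /Xrec; case: (zstepP a0 ar ir) => [ei|ai ir1|ia'].
- have aa : a.-1 < a by lia.
  have ar1 : a <= r.-1 by lia.
  have rr : r.-1 < r by lia.
  have h := XrecR aa; rewrite addn1 prednK // modnn in h.
  rewrite (_ : a.-1 + (r - a) = r.-1 - a + a) ?modnDr in h; last lia.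
  rewrite ei FL FE ?(ZR 0 a0) ?(ZR1 r.-1 ar1 rr); last lia.
  rewrite /X' /Z' in h *; lra.
- rewrite !FE ?ZR1 //; try lia.
  by rewrite -{1}(subnK ai) modnDr addrC.
- have ir1 : i < r.-1 by lia.
  rewrite FE // (ZR i ia') (modn_small ia').
  have [ea|ia1] := eqVneq i.+1 a.
    have eL : i + (r - a) = r.-1 by lia.
    have ei : i = a.-1 by lia.
    by rewrite eL FL ea (ZR1 a (leqnn a) ar) ei /Z'; ring.
  have ia2 : i.+1 < a by lia.
  have h := XrecR ia'; rewrite addn1 (modn_small ia2) in h.
  by rewrite (ZR i.+1 ia2) FE; last lia.
Qed.
End XdivRight.

(** * Separating charts *)

Definition exponent (D : divisor) (l1 l2 l3 : label) : int * int * int :=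
  (D l1, D l2, D l3).

Definition zexp : int * int * int := (0, 0, 0)%R.

Definition has_arrow_exponent r a l1 l2 l3 e := exists2 i, i < r &
  [\/ exponent (Xdiv r a i) l1 l2 l3 = e, exponent (Ydiv r a i) l1 l2 l3 = e
    | exponent (Zdiv r a i) l1 l2 l3 = e].

Definition trivial_arrow_invariant r a l1 l2 l3 T (g : nat -> T) :=
  forall i, i < r ->
  [/\ exponent (Xdiv r a i) l1 l2 l3 = zexp -> g ((i + 1) %% r) = g i,
      exponent (Ydiv r a i) l1 l2 l3 = zexp -> g ((i + a) %% r) = g i &
      exponent (Zdiv r a i) l1 l2 l3 = zexp -> g ((i + r - a) %% r) = g i].

(** The first condition says that the arrows with trivial monomial connect the
    quiver: every function invariant along them is constant. *)
Definition separating_chart r a l1 l2 l3 :=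
  (forall T (g : nat -> T), trivial_arrow_invariant r a l1 l2 l3 g ->
     forall i, i < r -> g i = g 0)
  /\ [/\ has_arrow_exponent r a l1 l2 l3 (1, 0, 0)%R,
         has_arrow_exponent r a l1 l2 l3 (0, 1, 0)%R
       & has_arrow_exponent r a l1 l2 l3 (0, 0, 1)%R].

Lemma separating_chart_base : separating_chart 1 0 None (Some 0) (Some 1).
Proof.
split; first by move=> T g _ [].
by split; exists 0 => //; [apply: Or31; rewrite /exponent !Xdiv0 | apply: Or32 | apply: Or33].
Qed.

Section TopCone.
Variables (r a : nat).
Hypotheses (adm : admissible r a) (r1 : 1 < r).
Let a0 : 0 < a. Proof. exact: admissible_gt0 adm r1. Qed.
Let ar : a < r. Proof. by case/and3P: adm. Qed.
Let r0 : 0 < r. Proof. exact: ltnW r1. Qed.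

Lemma Xdiv_D0 i : i < r -> Xdiv r a i (Some 0) = 0%R.
Proof.
by move=> ir; rewrite -(Xdiv_unique adm (F := fun=> 0%R) _ _ ir) ?Xdiv0.
Qed.

Lemma Xdiv_Dr i : i < r -> Xdiv r a i (Some r) = 0%R.
Proof.
move=> ir; rewrite -(Xdiv_unique adm (F := fun=> 0%R) _ _ ir) ?Xdiv0 //.
by move=> j jr _; rewrite /Xrec /Zdiv !tau_lt ?leqnn ?ltn_pmod.
Qed.

Lemma Zdiv_Dra m : m < r -> Zdiv r a m (Some (r - a)) = Posz (a <= m).
Proof.
move=> mr; rewrite /Zdiv leq_subr andbT.
by have [am|ma] := leqP a m; [rewrite tau_ltL | rewrite ltnNge tau_geR].
Qed.

Lemma Xdiv_Dra i : i < r -> Xdiv r a i (Some (r - a)) = Posz (i == r.-1).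
Proof.
move=> ir; rewrite -(Xdiv_unique adm (F := fun i => Posz (i == r.-1)) _ _ ir) //.
  by rewrite Xdiv0 ltn_eqF // ltn_predRL.
move=> j jr _; rewrite /Xrec !Zdiv_Dra ?ltn_pmod //.
case: (zstepP a0 ar jr) => [->|aj jr1|ja].
- have ar1 : a <= r.-1 by lia.
  have hr : r.-1 - a < r.-1 by lia.
  by rewrite eqxx (ltn_eqF hr) leqNgt a0 ar1.
- have h : j - a < r.-1 by lia.
  by rewrite (ltn_eqF jr1) (ltn_eqF h) aj (leqW aj).
- have jr1 : j < r.-1 by lia.
  rewrite (ltn_eqF jr1) [a <= j]leqNgt ja.
  have [ea|ja1] := eqVneq j.+1 a.
    by rewrite ea leqnn (_ : j + (r - a) = r.-1) ?eqxx //; lia.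
  have ja2 : j.+1 < a by lia.
  have h : j + (r - a) < r.-1 by lia.
  by rewrite leqNgt ja2 (ltn_eqF h).
Qed.

Lemma separating_chart_top : separating_chart r a (Some 0) (Some r) (Some (r - a)).
Proof.
split.
  move=> T g gP; elim=> // i IH ir.
  have [xP _ _] := gP i (ltnW ir); rewrite -IH ?(ltnW ir) // -xP ?addn1 ?modn_small //.
  by rewrite /exponent Xdiv_D0 ?Xdiv_Dr ?Xdiv_Dra ?ltn_eqF ?ltn_predRL // ltnW.
split.
- exists 0 => //; apply: Or32; rewrite /exponent !YdivE add0n modn_small //=.
  by rewrite leqNgt tau_lt // leqNgt tau_ltL.
- exists 0 => //; apply: Or33; rewrite /exponent Zdiv_Dra // leqNgt a0.
  by rewrite /Zdiv /= tau_lt // leqnn.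
- exists r.-1; first by rewrite ltn_predL.
  by apply: Or31; rewrite /exponent Xdiv_D0 ?Xdiv_Dr ?Xdiv_Dra ?eqxx // ltn_predL.
Qed.
End TopCone.

Section SeparatingLeft.
Variables (r a : nat) (l1 l2 l3 : label).
Hypotheses (adm : admissible r a) (r1 : 1 < r).
Hypotheses (h1 : l1 \in labels (r - a)) (h2 : l2 \in labels (r - a))
  (h3 : l3 \in labels (r - a)).
Let a0 : 0 < a. Proof. exact: admissible_gt0 adm r1. Qed.
Let ar : a < r. Proof. by case/and3P: adm. Qed.
Let rL0 : 0 < r - a. Proof. by rewrite subn_gt0. Qed.
Let ra : r %% (r - a) = a %% (r - a). Proof. by rewrite -{1}(subnKC (ltnW ar)) modnDr. Qed.
Local Notation rL := (r - a).
Local Notation aL := (r %% (r - a)).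
Local Notation exp D := (exponent D l1 l2 l3).

Lemma exponent_XdivL c : c < rL -> exp (Xdiv r a c) = exp (Xdiv rL aL c).
Proof. by move=> cr; rewrite /exponent !(XdivL adm r1). Qed.

Lemma exponent_ZdivL i : a <= i -> i < r -> exp (Zdiv r a i) = exp (Zdiv rL aL (i %% rL)).
Proof. by move=> ai ir; rewrite /exponent !(ZdivL adm r1). Qed.

Lemma exponent_ZdivL0 i : i < a -> exp (Zdiv r a i) = zexp.
Proof. by move=> ia; rewrite /exponent !(ZdivL0 adm r1). Qed.

Lemma exponent_YdivL c : c < rL -> exp (Ydiv r a c) = exp (Ydiv rL aL c).
Proof.
move=> cr; rewrite /exponent !YdivE (modn_small (_ : c + a < r)); last lia.
by rewrite !(YtauL adm r1) ?ra ?modnDmr //; lia.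
Qed.

Lemma invariant_modL T (g : nat -> T) :
  trivial_arrow_invariant r a l1 l2 l3 g -> forall i, i < r -> g i = g (i %% rL).
Proof.
move=> gP; elim/ltn_ind=> i IH ir.
have [irL|rLi] := ltnP i rL; first by rewrite modn_small.
have ja : i - rL < a by lia.
have [_ _ zP] := gP (i - rL) (ltn_trans ja ar).
have e : (i - rL + r - a) %% r = i by rewrite modn_small; lia.
have := zP (exponent_ZdivL0 ja); rewrite e => ->.
by rewrite IH -?(modnDr (i - rL)) ?subnK //; lia.
Qed.

Lemma invariant_restrictL T (g : nat -> T) :
  trivial_arrow_invariant r a l1 l2 l3 g -> trivial_arrow_invariant rL aL l1 l2 l3 g.
Proof.
move=> gP; have gmod := invariant_modL gP.
move=> c cr; have cr' : c < r by lia.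
have [xP yP zP] := gP c cr'; split=> triv.
- rewrite -gmod; last lia.
  by rewrite -(xP _) ?exponent_XdivL // modn_small //; lia.
- rewrite ra modnDmr -gmod; last lia.
  by rewrite -(yP _) ?exponent_YdivL // modn_small //; lia.
- have [i /andP [ai ir] ic] := residue_window a rL0 cr.
  rewrite subnKC in ir; last exact: ltnW.
  have [_ _ zPi] := gP i ir.
  have zi : exp (Zdiv r a i) = zexp by rewrite exponent_ZdivL // ic.
  have := zPi zi.
  rewrite modn_addn_sub_ge // -ic ra modnBm // -!gmod //; lia.
Qed.

Lemma has_arrow_exponentL e :
  has_arrow_exponent rL aL l1 l2 l3 e -> has_arrow_exponent r a l1 l2 l3 e.
Proof.
case=> c cr [xe|ye|ze].
- by exists c; [lia | apply: Or31; rewrite exponent_XdivL].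
- by exists c; [lia | apply: Or32; rewrite exponent_YdivL].
have [i /andP [ai ir] ic] := residue_window a rL0 cr.
rewrite subnKC in ir; last exact: ltnW.
by exists i => //; apply: Or33; rewrite exponent_ZdivL // ic.
Qed.

Lemma separating_chartL :
  separating_chart rL aL l1 l2 l3 -> separating_chart r a l1 l2 l3.
Proof.
case=> conn [u1 u2 u3]; split; last by split; apply: has_arrow_exponentL.
move=> T g gP i ir; rewrite (invariant_modL gP) //.
by apply: conn; [exact: invariant_restrictL | rewrite ltn_pmod].
Qed.

End SeparatingLeft.

Section SeparatingRight.
Variables (r a : nat) (l1 l2 l3 : label).
Hypotheses (adm : admissible r a) (r1 : 1 < r).
Hypotheses (h1 : l1 \in labels a) (h2 : l2 \in labels a) (h3 : l3 \in labels a).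
Let a0 : 0 < a. Proof. exact: admissible_gt0 adm r1. Qed.
Let ar : a < r. Proof. by case/and3P: adm. Qed.
Let hR : negmod r a + r = 0 %[mod a]. Proof. exact: negmodP. Qed.
Local Notation aR := (negmod r a).
Local Notation sh := (shiftR r a).
Local Notation exp D := (exponent D (sh l1) (sh l2) (sh l3)).
Local Notation exp' D := (exponent D l1 l2 l3).

(* The arrows [z_c] of the quivers for [(r, a)] and [(a, <-r>_a)] have the
   same head modulo [a]. *)
Lemma modn_addn_negmod c : (c + (r - a)) %% a = (c + a - aR) %% a.
Proof.
have aRa : aR < a by apply: negmod_lt.
apply: (@modn_addr_cancel (aR + a)).
rewrite (_ : c + a - aR + (aR + a) = 2 * a + c); last lia.
rewrite (_ : c + (r - a) + (aR + a) = c + (aR + r)); last lia.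
by rewrite modnMDl -modnDmr hR mod0n addn0.
Qed.

Lemma exponent_XdivR c : c < a -> exp (Xdiv r a c) = exp' (Xdiv a aR c).
Proof. by move=> ca; rewrite /exponent !(XdivR adm r1). Qed.

Lemma exponent_ZdivR i : i < a -> exp (Zdiv r a i) = exp' (Zdiv a aR i).
Proof. by move=> ia; rewrite /exponent !(ZdivR adm r1). Qed.

Lemma exponent_YdivR0 j : a <= (j + a) %% r -> exp (Ydiv r a j) = zexp.
Proof.
move=> ja; have jr : (j + a) %% r < r by rewrite ltn_pmod // ltnW.
by rewrite /exponent !YdivE (YtauR0 adm r1 h1 ja jr) (YtauR0 adm r1 h2 ja jr)
  (YtauR0 adm r1 h3 ja jr).
Qed.
Lemma exponent_YdivR c : c < a ->
  exp (Ydiv r a ((c + aR) %% a + (r - a))) = exp' (Ydiv a aR c).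
Proof.
move=> ca; have ma : (c + aR) %% a < a by rewrite ltn_pmod.
rewrite /exponent !YdivE (_ : ((c + aR) %% a + (r - a) + a) %% r = (c + aR) %% a).
  by rewrite !(YtauR adm r1).
by rewrite -addnA subnK ?modnDr ?(modn_small (ltn_trans ma ar)) // ltnW.
Qed.

Lemma invariant_modR T (g : nat -> T) :
  trivial_arrow_invariant r a (sh l1) (sh l2) (sh l3) g -> forall i, i < r -> g i = g (i %% a).
Proof.
move=> gP; elim/ltn_ind=> i IH ir.
have [ia|ai] := ltnP i a; first by rewrite modn_small.
have [_ yP _] := gP (i - a) (leq_ltn_trans (leq_subr a i) ir).
have e : (i - a + a) %% r = i by rewrite subnK ?modn_small.
have ha : a <= (i - a + a) %% r by rewrite e.
have := yP (exponent_YdivR0 ha); rewrite e => ->.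
by rewrite IH -?(modnDr (i - a)) ?subnK //; lia.
Qed.

Lemma invariant_restrictR T (g : nat -> T) :
  trivial_arrow_invariant r a (sh l1) (sh l2) (sh l3) g ->
  trivial_arrow_invariant a aR l1 l2 l3 g.
Proof.
move=> gP; have gmod := invariant_modR gP.
move=> c ca; have cr : c < r by lia.
split=> triv.
- have [xP _ _] := gP c cr; rewrite -gmod; last lia.
  by rewrite -(xP _) ?exponent_XdivR // modn_small //; lia.
- set m := (c + aR) %% a; have ma : m < a by rewrite ltn_pmod.
  have mr : m + (r - a) < r by lia.
  have [_ yP _] := gP _ mr.
  have := yP (etrans (exponent_YdivR ca) triv).
  rewrite -addnA subnK ?modnDr ?(modn_small (ltn_trans ma ar)) ?(ltnW ar) // => ->.
  rewrite gmod; last lia.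
  congr g; apply: modn_small_eq => //; apply: (@modn_addr_cancel a).
  by rewrite -addnA subnK ?(ltnW ar) // /m modnDml -addnA -modnDmr hR mod0n addn0 modnDr.
- have [_ _ zP] := gP c cr.
  have := zP (etrans (exponent_ZdivR ca) triv).
  rewrite modn_addn_sub_lt ?(ltnW ar) // => <-.
  by rewrite -modn_addn_negmod [RHS]gmod //; lia.
Qed.

Lemma has_arrow_exponentR e :
  has_arrow_exponent a aR l1 l2 l3 e -> has_arrow_exponent r a (sh l1) (sh l2) (sh l3) e.
Proof.
case=> c ca [xe|ye|ze].
- by exists c; [lia | apply: Or31; rewrite exponent_XdivR].
- exists ((c + aR) %% a + (r - a)); last by apply: Or32; rewrite exponent_YdivR.
  by have := ltn_pmod (c + aR) a0; lia.
- by exists c; [lia | apply: Or33; rewrite exponent_ZdivR].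
Qed.

Lemma separating_chartR :
  separating_chart a aR l1 l2 l3 -> separating_chart r a (sh l1) (sh l2) (sh l3).
Proof.
case=> conn [u1 u2 u3]; split; last by split; apply: has_arrow_exponentR.
move=> T g gP i ir; rewrite (invariant_modR gP) //.
by apply: conn; [exact: invariant_restrictR | rewrite ltn_pmod].
Qed.

End SeparatingRight.

Definition separating_cone (r a : nat) (sigma : cone3) :=
  exists l1 l2 l3, [/\ [&& l1 \in labels r, l2 \in labels r & l3 \in labels r],
    sigma = (rayvec r a l1, rayvec r a l2, rayvec r a l3)
    & separating_chart r a l1 l2 l3].

Lemma separating_cone_top r a : admissible r a -> 1 < r ->
  separating_cone r a (e2, e3, pvec r a (r - a)).
Proof.
move=> adm r1; exists (Some 0), (Some r), (Some (r - a)); split.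
- by rewrite !mem_labels leqnn leq0n leq_subr.
- by rewrite /= pvec0 ?pvecr // ltnW.
- exact: separating_chart_top.
Qed.

Lemma separating_coneL r a sigma : admissible r a -> 1 < r ->
  separating_cone (r - a) (r %% (r - a)) sigma ->
  separating_cone r a (mapcone (Lmap r a) sigma).
Proof.
move=> adm r1 [l1 [l2 [l3 [/and3P [h1 h2 h3] -> sep]]]].
exists l1, l2, l3; split.
- by rewrite !(labels_subset (leq_subr a r)).
- by rewrite /mapcone /= !Lmap_rayvec.
- exact: separating_chartL.
Qed.

Lemma separating_coneR r a sigma : admissible r a -> 1 < r ->
  separating_cone a (negmod r a) sigma ->
  separating_cone r a (mapcone (Rmap r a) sigma).
Proof.
move=> adm r1 [l1 [l2 [l3 [/and3P [h1 h2 h3] -> sep]]]].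
exists (shiftR r a l1), (shiftR r a l2), (shiftR r a l3); split.
- by rewrite !shiftR_labels.
- by rewrite /mapcone /= !Rmap_rayvec.
- exact: separating_chartR.
Qed.

Lemma dfan_fuel_separating n r a sigma : admissible r a -> r <= n ->
  sigma \in dfan_fuel n r a -> separating_cone r a sigma.
Proof.
elim: n r a sigma => [|n IH] r a sigma adm rn; first by case/and3P: adm; lia.
rewrite /=; case: ifPn => [r1|/negPf r1].
  rewrite inE => /eqP ->; have [-> ->] : r = 1 /\ a = 0 by case/and3P: adm; lia.
  by exists None, (Some 0), (Some 1); split=> //; exact: separating_chart_base.
have {}r1 : 1 < r by rewrite ltnNge r1.
have a0 := admissible_gt0 adm r1; case/and3P: (adm) => _ ar _.
rewrite inE mem_cat => /or3P [/eqP -> | /mapP [c hc ->] | /mapP [c hc ->]].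
- exact: separating_cone_top.
- by apply: separating_coneL => //; apply: IH hc; rewrite /rL /aL; [exact: admissibleL | lia].
- by apply: separating_coneR => //; apply: IH hc; rewrite /rR /aR; [exact: admissibleR | lia].
Qed.

Local Open Scope ring_scope.

Lemma monomial_rayvec r a l1 l2 l3 D (s : point) : (0 < r)%N ->
  l1 \in labels r -> l2 \in labels r -> l3 \in labels r ->
  monomial r a (rayvec r a l1, rayvec r a l2, rayvec r a l3) D s =
  s.1.1 ^ D l1 * s.1.2 ^ D l2 * s.2 ^ D l3.
Proof. by move=> r0 h1 h2 h3; rewrite /monomial /= !coefAt_rayvec. Qed.

Section ChartIsomorphism.
Variables (r a : nat) (l1 l2 l3 : label) (s t : point) (g : nat -> CC).
Hypotheses (r0 : (0 < r)%N) (h1 : l1 \in labels r) (h2 : l2 \in labels r)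
  (h3 : l3 \in labels r).
Hypothesis sep : separating_chart r a l1 l2 l3.
Local Notation sigma := (rayvec r a l1, rayvec r a l2, rayvec r a l3).
Hypothesis giso : (forall i, (i < r)%N -> g i != 0) /\ (forall i, (i < r)%N ->
  [/\ rep_x (mckay_family r a sigma t) i =
        g ((i + 1) %% r)%N * rep_x (mckay_family r a sigma s) i / g i,
      rep_y (mckay_family r a sigma t) i =
        g ((i + a) %% r)%N * rep_y (mckay_family r a sigma s) i / g i &
      rep_z (mckay_family r a sigma t) i =
        g ((i + r - a) %% r)%N * rep_z (mckay_family r a sigma s) i / g i]).

Let monoE D p : monomial r a sigma D p = p.1.1 ^ D l1 * p.1.2 ^ D l2 * p.2 ^ D l3.
Proof. exact: monomial_rayvec. Qed.

Let trivial_monomial D p : exponent D l1 l2 l3 = zexp -> monomial r a sigma D p = 1.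
Proof. by rewrite monoE => -[-> -> ->]; rewrite !expr0z !mulr1. Qed.

(* Both representations take the value [1] on an arrow with trivial monomial,
   so the gauge [g] agrees at its two ends. *)
Lemma iso_gauge_constant i : (i < r)%N -> g i = g 0%N.
Proof.
have [gnz gs] := giso.
have gauge_eq h j : (j < r)%N -> 1 = g h * 1 / g j -> g h = g j.
  by move=> jr; rewrite mulr1 => /esym/divr1_eq.
move: i; apply: sep.1 => i ir; have [ex ey ez] := gs i ir.
by split=> /trivial_monomial triv; apply: gauge_eq => //;
  [move: ex | move: ey | move: ez]; rewrite /= !triv.
Qed.

Lemma iso_coordinate_eq e : has_arrow_exponent r a l1 l2 l3 e ->
  t.1.1 ^ e.1.1 * t.1.2 ^ e.1.2 * t.2 ^ e.2 = s.1.1 ^ e.1.1 * s.1.2 ^ e.1.2 * s.2 ^ e.2.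
Proof.
have [gnz gs] := giso; have g0 : g 0%N != 0 by apply: gnz.
have gdiv i h v : (i < r)%N -> g (h %% r)%N * v / g i = v.
  by move=> ir; rewrite !iso_gauge_constant ?ltn_pmod // mulrAC divff ?mul1r.
case=> i ir; have [ex ey ez] := gs i ir.
by case=> <-; rewrite -!monoE; [move: ex | move: ey | move: ez]; rewrite /= gdiv.
Qed.

End ChartIsomorphism.

Theorem mainTheorem10 (r a : nat) (hr : (1 < r)%N) (ha0 : (0 < a)%N) (har : (a < r)%N)
  (hco : coprime r a) (sigma : cone3) (hsigma : sigma \in danilov_cones r a)
  (s t : point) (hst : s <> t) :
  ~ qrep_iso r a (mckay_family r a sigma s) (mckay_family r a sigma t).
Proof.
have adm : admissible r a by apply/and3P; split; rewrite ?(ltnW hr).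
have [l1 [l2 [l3 [/and3P [h1 h2 h3] -> sep]]]] := dfan_fuel_separating adm (leqnn r) hsigma.
case=> g giso; have [_ [u1 u2 u3]] := sep.
have coord e := @iso_coordinate_eq r a l1 l2 l3 s t g (ltnW hr) h1 h2 h3 sep giso e.
move: (coord _ u1) (coord _ u2) (coord _ u3) hst.
case: s {coord giso} => [[s1 s2] s3]; case: t => [[t1 t2] t3] /=.
by rewrite !expr1z !expr0z !mulr1 !mul1r => -> -> ->.
Qed.
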